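(* Let $\mathcal S$ be a finite collection of subsets of $[d]$ satisfying the merged-staircase property, i.e. its elements can be ordered $S_1,\dots,S_r$ so that $|S_i\setminus\bigcup_{j<i}S_j|\le1$ for every $i$. Draw $\{\alpha_S\}_{S\in\mathcal S}$ from any probability measure on $\mathbb R^{|\mathcal S|}$ absolutely continuous with respect to Lebesgue measure, and let $f^*=\sum_{S\in\mathcal S}\alpha_S\chi_S$. Then $f^*$ satisfies the stable merged-staircase property almost surely.
   Context: $\chi_S(\mathbf x)=\prod_{j\in S}x_j$ on $\{\pm1\}^d$. Every $f:\{\pm1\}^m\to\mathbb R$ has a unique expansion $f=\sum_S\beta_S\chi_S$; $f$ satisfies MSP if the sets $S$ with $\beta_S\ne0$ can be ordered $S_1,\dots,S_r$ with $|S_i\setminus\bigcup_{j<i}S_j|\le1$ for all $i$. A cell is $C=\{\mathbf x\in\{\pm1\}^d:x_j=z_j,\ j\in J(C)\}$; the restriction $f^*|_C$ is viewed as a function of the free coordinates $x_j$, $j\notin J(C)$. $f^*$ satisfies the stable merged-staircase property (SMSP) if $f^*|_C$ satisfies MSP for every cell $C$. *)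

From HB Require Import structures.
From mathcomp Require Import all_boot all_order all_algebra.
From mathcomp Require Import all_classical all_reals all_analysis.
Set Implicit Arguments. Unset Strict Implicit. Unset Printing Implicit Defensive.
Import Order.TTheory GRing.Theory Num.Theory.
Local Open Scope classical_set_scope.
Local Open Scope ring_scope.

Section Boolean.
Variable R : realType.
Variable I : finType.

(* a point of {+-1}^I is encoded as x : {ffun I -> bool}; coordinate value
   x_j = -1 if x j = true and +1 otherwise *)
Definition pm1 (b : bool) : R := if b then -1 else 1.

Definition chi (S : {set I}) (x : {ffun I -> bool}) : R :=
  \prod_(j in S) pm1 (x j).

Definition msp_family (F : {set {set I}}) : Prop :=
  exists s : seq {set I}, [/\ uniq s, s =i F &
    forall i, (i < size s)%N ->
      (#| nth finset.set0 s i :\: \big[@finset.setU _/finset.set0]_(T <- take i s) T | <= 1)%N].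

Definition MSP (f : {ffun I -> bool} -> R) : Prop :=
  exists beta : {set I} -> R,
    (forall x, f x = \sum_(S : {set I}) beta S * chi S x) /\
    msp_family [set S | beta S != 0].
End Boolean.

(* restriction of f : {+-1}^d -> R to the cell {x | x_j = z_j, j in J},
   as a function of the free coordinates j \notin J *)
Definition restrict (R : realType) (d : nat) (f : {ffun 'I_d -> bool} -> R)
    (J : {set 'I_d}) (z : {ffun 'I_d -> bool})
    (x : {ffun {j : 'I_d | j \notin J} -> bool}) : R :=
  f [ffun j => match insub j with Some k => x k | None => z j end].

Definition SMSP (R : realType) (d : nat) (f : {ffun 'I_d -> bool} -> R) : Prop :=
  forall (J : {set 'I_d}) (z : {ffun 'I_d -> bool}), MSP (@restrict R d f J z).

(* f* = sum_{S in SS} alpha_S chi_S, the coefficients being listed in a tuple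
   indexed by 'I_#|SS| through the enumeration of SS *)
Definition fstar (R : realType) (d : nat) (SS : {set {set 'I_d}})
    (a : #|SS|.-tuple R) (x : {ffun 'I_d -> bool}) : R :=
  \sum_(i < #|SS|) tnth a i * chi R (@enum_val _ (mem SS) i) x.

(* closed box in R^n and Lebesgue-null sets of R^n (outer measure zero:
   coverable by countably many boxes of arbitrarily small total volume) *)
Definition box (R : realType) (n : nat) (lo hi : n.-tuple R) : set (n.-tuple R) :=
  [set x | forall i, tnth lo i <= tnth x i <= tnth hi i].

Definition lebesgue_null (R : realType) (n : nat) (A : set (n.-tuple R)) : Prop :=
  forall e : R, 0 < e -> exists lo hi : nat -> n.-tuple R,
    [/\ forall k i, tnth (lo k) i <= tnth (hi k) i,
        A `<=` \bigcup_k box (lo k) (hi k) &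
        (\sum_(0 <= k <oo) (\prod_(i < n) (tnth (hi k) i - tnth (lo k) i))%:E
           <= e%:E)%E].

Definition abs_cont_lebesgue (R : realType) (n : nat)
    (P : probability (n.-tuple R) R) : Prop :=
  forall A : set (n.-tuple R), measurable A -> lebesgue_null A -> P A = 0%E.

From Pilot Require Import Defs.
From HB Require Import structures.
From mathcomp Require Import all_boot all_order all_algebra.
From mathcomp Require Import all_classical all_reals all_analysis.
From mathcomp Require Import measurable_realfun.
From mathcomp Require Import ring lra.
Import Order.TTheory GRing.Theory Num.Theory.
Set Implicit Arguments. Unset Strict Implicit. Unset Printing Implicit Defensive.
Local Open Scope ring_scope.

(* Call a coefficient vector a sign-generic if no nontrivial signed subsum
   sum_i e_i a_i with e in {-1,0,1}^n vanishes.  Restricting chi_S to a cell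
   with fixed coordinates J gives +-chi_(S \ J), so the coefficient of chi_T in
   the restriction of f* is a signed sum of the a_S over the S with S \ J = T;
   for sign-generic a it vanishes exactly when no S in SS has trace T.  The
   traces of a merged staircase, kept in the same order without repetitions,
   again form a merged staircase.  Finally the non-generic vectors lie in
   finitely many hyperplanes, and the bounded part of a hyperplane is covered
   by N^(n-1) grid boxes of total volume O(1/N), so hyperplanes are
   Lebesgue-null and hence P-negligible. *)

Section Staircase.
Variable X : finType.

Definition staircase (s : seq {set X}) : Prop :=
  forall i, (i < size s)%N ->
    (#|nth finset.set0 s i :\: (\bigcup_(T <- take i s) T)%SET| <= 1)%N.

Lemma staircase_rcons s S :
  staircase (rcons s S) <->
  staircase s /\ (#|S :\: (\bigcup_(T <- s) T)%SET| <= 1)%N.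
Proof.
have nth_take_rcons i : (i < size s)%N ->
    nth finset.set0 (rcons s S) i = nth finset.set0 s i /\
    take i (rcons s S) = take i s.
  by move=> lt; rewrite -cats1 nth_cat take_cat lt.
have [nth_last take_last] : nth finset.set0 (rcons s S) (size s) = S /\
    take (size s) (rcons s S) = s.
  by rewrite nth_rcons ltnn eqxx -cats1 take_size_cat.
rewrite /staircase size_rcons; split.
  move=> st; split; last by have := st _ (ltnSn _); rewrite nth_last take_last.
  move=> i lt; have [<- <-] := nth_take_rcons i lt.
  by apply: st; rewrite ltnS ltnW.
move=> [st last_le] i; rewrite ltnS leq_eqVlt => /orP[/eqP ->|lt].
  by rewrite nth_last take_last.
by have [-> ->] := nth_take_rcons i lt; apply: st.
Qed.

(* [undup] keeps last occurrences; reversing twice keeps the first ones. *)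
Lemma staircase_undup_first s : staircase s -> staircase (rev (undup (rev s))).
Proof.
elim/last_ind: s => [//|s S IHs] /staircase_rcons[st S_le].
rewrite rev_rcons /=; case: ifP => [_|_]; first exact: IHs.
rewrite rev_cons; apply/staircase_rcons; split; first exact: IHs.
rewrite (eq_big_idem _ _ (@finset.setUid X) (r2 := s)) // => T.
by rewrite mem_rev mem_undup mem_rev.
Qed.

End Staircase.

Lemma msp_familyE (X : finType) (F : {set {set X}}) :
  msp_family F <-> exists s, [/\ uniq s, s =i F & staircase s].
Proof. by []. Qed.

Section Preimage.
Variables (X Y : finType) (f : Y -> X).
Hypothesis f_inj : injective f.

Lemma card_preimset_le (A : {set X}) : (#|f @^-1: A| <= #|A|)%N.
Proof.
rewrite -(card_imset _ f_inj); apply: subset_leq_card.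
by apply/fintype.subsetP => x /imsetP[y]; rewrite inE => Ay ->.
Qed.

Lemma staircase_preimset (s : seq {set X}) :
  staircase s -> staircase [seq f @^-1: A | A : {set X} <- s].
Proof.
move=> st i; rewrite size_map => lt.
rewrite (nth_map finset.set0) // -map_take big_map.
rewrite -(big_morph (fun A : {set X} => f @^-1: A) (preimsetU f) (preimset0 f)).
by rewrite -preimsetD (leq_trans (card_preimset_le _)) ?st.
Qed.

Lemma msp_family_preimset (F : {set {set X}}) :
  msp_family F -> msp_family [set f @^-1: (A : {set X}) | A in F].
Proof.
case/msp_familyE=> s [_ sF st]; apply/msp_familyE.
exists (rev (undup (rev [seq f @^-1: A | A : {set X} <- s]))); split.
- by rewrite rev_uniq undup_uniq.
- move=> T; rewrite mem_rev mem_undup mem_rev.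
  by apply/mapP/imsetP => -[S SF ->]; exists S; rewrite ?sF // -sF.
- exact/staircase_undup_first/staircase_preimset.
Qed.

End Preimage.

Section Characters.
Variables (R : realType) (I : finType).

Lemma pm1_addb b c : pm1 R (b (+) c) = pm1 R b * pm1 R c.
Proof. by case: b; case: c; rewrite /= ?mulN1r ?mul1r ?opprK. Qed.

Lemma chi_parity (S : {set I}) x :
  chi R S x = pm1 R (\big[addb/false]_(j in S) x j).
Proof. by rewrite (big_morph (pm1 R) pm1_addb (erefl (pm1 R false))). Qed.

Definition opm1 (o : option bool) : R := oapp (pm1 R) 0 o.

Definition sign_generic n (a : n.-tuple R) : Prop :=
  forall s : {ffun 'I_n -> option bool}, s != [ffun => None] ->
    \sum_i opm1 (s i) * tnth a i != 0.

End Characters.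

Section Restriction.
Variables (R : realType) (d : nat) (J : {set 'I_d}) (z : {ffun 'I_d -> bool}).
Local Notation free := {j : 'I_d | j \notin J}.

Lemma restrict_chi (S : {set 'I_d}) x :
  @Defs.restrict R d (chi R S) J z x = chi R (S :&: J) z * chi R (val @^-1: S) x.
Proof.
rewrite /Defs.restrict /chi (bigID (mem J)) /=; congr (_ * _).
  apply: eq_big => [j|j /andP[_ jJ]]; first by rewrite finset.in_setI.
  by rewrite ffunE insubF ?jJ.
rewrite (eq_bigl (fun j => (j \in [pred j | j \notin J]) && (j \in S)));
  last by move=> j; rewrite andbC.
rewrite big_sub_cond; apply: eq_big => [j|j _]; first by rewrite inE.
by rewrite ffunE valK.
Qed.

Variables (SS : {set {set 'I_d}}) (a : #|SS|.-tuple R).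
Local Notation E i := (@enum_val _ (mem SS) i).

Definition restrict_coef (T : {set free}) : R :=
  \sum_(i < #|SS| | val @^-1: E i == T) tnth a i * chi R (E i :&: J) z.

Lemma restrict_fstarE x :
  @Defs.restrict R d (fstar a) J z x = \sum_T restrict_coef T * chi R T x.
Proof.
rewrite {1}/Defs.restrict /fstar.
under eq_bigr do rewrite -/(Defs.restrict _ _ _) restrict_chi mulrA.
rewrite (partition_big (fun i => val @^-1: E i : {set free}) predT) //=.
by apply: eq_bigr => T _; rewrite mulr_suml; apply: eq_bigr => i /eqP ->.
Qed.

Lemma restrict_coef_neq0 : sign_generic a -> forall T,
  (restrict_coef T != 0) = (T \in [set val @^-1: (A : {set 'I_d}) | A in SS]).
Proof.
move=> gen T; apply/idP/idP => [coefT|/imsetP[A AS ->]].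
  apply: contraNT coefT => noT; apply/eqP/big1 => i /eqP Ei.
  by case/negP: noT; rewrite -Ei imset_f // enum_valP.
pose s := [ffun i => if val @^-1: E i == val @^-1: A :> {set free}
  then Some (\big[addb/false]_(j in E i :&: J) z j) else None].
have /gen : s != [ffun => None].
  apply/eqP => /ffunP /(_ (enum_rank_in AS A)).
  by rewrite !ffunE enum_rankK_in // eqxx.
apply: contraNN => /eqP coef0; apply/eqP; rewrite -[RHS]coef0.
rewrite /restrict_coef [RHS]big_mkcond; apply: eq_bigr => i _; rewrite ffunE.
by case: ifP => _; rewrite /= ?mul0r // chi_parity mulrC.
Qed.

End Restriction.

Arguments restrict_coef {R d} J z {SS} a T.

Lemma SMSP_fstar (R : realType) (d : nat) (SS : {set {set 'I_d}})
    (a : #|SS|.-tuple R) :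
  msp_family SS -> sign_generic a -> SMSP (fstar a).
Proof.
move=> msp gen J z; exists (restrict_coef J z a); split.
  exact: restrict_fstarE.
have -> : [set T | restrict_coef J z a T != 0] =
          [set val @^-1: (A : {set 'I_d}) | A in SS].
  by apply/setP => T; rewrite inE restrict_coef_neq0.
exact: (msp_family_preimset val_inj msp).
Qed.

Local Open Scope classical_set_scope.

Definition box_volume (R : realType) n (lo hi : n.-tuple R) : R :=
  \prod_(i < n) (tnth hi i - tnth lo i).

Lemma lebesgue_nullS (R : realType) n (A B : set (n.-tuple R)) :
  B `<=` A -> lebesgue_null A -> lebesgue_null B.
Proof.
move=> BA nullA e e0; have [lo [hi [lohi Acov vol]]] := nullA e e0.
by exists lo, hi; split => //; exact: subset_trans Acov.
Qed.

(* In dimension 0 every box has volume 1, so not even [set0] is null there. *)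
Lemma lebesgue_null_finite_covers (R : realType) n (A : set (n.-tuple R)) :
  (0 < n)%N ->
  (forall e : R, 0 < e -> exists (G : finType) (lo hi : G -> n.-tuple R),
    [/\ forall g i, tnth (lo g) i <= tnth (hi g) i,
        A `<=` \bigcup_g box (lo g) (hi g) &
        \sum_g box_volume (lo g) (hi g) <= e]) ->
  lebesgue_null A.
Proof.
move=> n0 cover e e0; have [G [lo [hi [lohi Acov vol]]]] := cover e e0.
pose bs := [seq (lo g, hi g) | g <- enum G].
pose x0 : n.-tuple R := [tuple 0 | _ < n].
pose LO m := (nth (x0, x0) bs m).1; pose HI m := (nth (x0, x0) bs m).2.
have LO_le_HI m i : tnth (LO m) i <= tnth (HI m) i.
  rewrite /LO /HI; case: (ltnP m (size bs)) => [/(mem_nth (x0, x0))|ge].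
    by case/mapP=> g _ ->; apply: lohi.
  by rewrite nth_default.
have vol_ge0 m : (0 <= (box_volume (LO m) (HI m))%:E)%E.
  by rewrite lee_fin; apply: prodr_ge0 => i _; rewrite subr_ge0.
exists LO, HI; split => //.
  move=> a /Acov[g _ box_a]; exists (index (lo g, hi g) bs) => //.
  by rewrite /LO /HI nth_index // map_f // mem_enum.
rewrite (nneseries_split 0 (size bs)); last by move=> m _; apply: vol_ge0.
rewrite add0n eseries0 ?adde0; last first.
  move=> m ge _; rewrite /box_volume /LO /HI nth_default //=.
  by rewrite (bigD1 (Ordinal n0)) //= subrr mul0r.
rewrite sumEFin lee_fin (le_trans _ vol) //.
rewrite -(big_nth (x0, x0) predT (fun b => box_volume b.1 b.2)) big_map.
by rewrite big_enum.
Qed.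

Lemma grid_cell (R : realType) (M t : R) (N : nat) : 0 < M -> `|t| <= M ->
  let h := M *+ 2 / N.+1%:R in
  exists j : 'I_N.+1, - M + j%:R * h <= t <= - M + j%:R * h + h.
Proof.
move=> M0 tM h; have h0 : 0 < h by rewrite divr_gt0 ?mulrn_wgt0.
move: tM; rewrite ler_norml => /andP[tMl tMr].
pose u := (t + M) / h.
have tE : t = - M + u * h by rewrite /u divfK ?gt_eqF //; ring.
have u0 : 0 <= u by apply: divr_ge0; [lra | exact: ltW].
have uN : u <= N.+1%:R.
  by rewrite ler_pdivrMr // /h mulrCA mulfV ?mulr1 ?gt_eqF //; lra.
exists (inord (minn (Num.truncn u) N)); rewrite inordK ?ltnS ?geq_minr //.
suff : (minn (Num.truncn u) N)%:R <= u <= (minn (Num.truncn u) N)%:R + 1.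
  by rewrite tE => /andP[? ?]; apply/andP; split; nra.
have /andP[tr_le lt_tr] := truncn_itv u0; rewrite -natr1 in lt_tr.
case: (leqP (Num.truncn u) N) => [_|Ntr]; first lra.
by rewrite -(ler_nat R) -!natr1 in Ntr uN; lra.
Qed.

Section HyperplaneCover.
Variables (R : realType) (n : nat) (c : 'I_n -> R) (k : 'I_n) (M : R).
Hypotheses (ck : c k != 0) (M0 : 0 < M).

Let b i : R := c i / c k.
Let B : R := \sum_(i | i != k) `|b i|.
Let vol_const : R := B * M * \prod_(i | i != k) (M *+ 2) *+ 4.

Let B_ge0 : 0 <= B. Proof. by apply: sumr_ge0 => i _. Qed.

Let vol_const_ge0 : 0 <= vol_const.
Proof.
have M2 : 0 <= M *+ 2 by rewrite mulrn_wge0 ?ltW.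
by apply/mulrn_wge0/mulr_ge0; [exact: mulr_ge0 B_ge0 (ltW M0) | exact: prodr_ge0].
Qed.

Section Grid.
Variable N : nat.
Let h : R := M *+ 2 / N.+1%:R.
Local Notation grid := {ffun 'I_n -> 'I_N.+1}.
Let node (g : grid) i : R := - M + (g i)%:R * h.
Let center (g : grid) : R := - \sum_(i | i != k) b i * node g i.

(* Cells with [g k != 0] get a box that is degenerate in direction [k], so
   gridding all [n] coordinates does not change the total volume. *)
Definition grid_lo (g : grid) : n.-tuple R :=
  [tuple if i == k then center g - B * h else node g i | i < n].
Definition grid_hi (g : grid) : n.-tuple R := [tuple if i == k then
  (if g k == ord0 then center g + B * h else center g - B * h)
  else node g i + h | i < n].

Let h_gt0 : 0 < h. Proof. by rewrite divr_gt0 ?mulrn_wgt0. Qed.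

Lemma grid_lo_le_hi g i : tnth (grid_lo g) i <= tnth (grid_hi g) i.
Proof.
have h0 := h_gt0; have Bh := mulr_ge0 B_ge0 (ltW h0).
rewrite !tnth_mktuple; case: eqP => _; last lra.
by case: ifP => _; lra.
Qed.

Lemma hyperplane_grid_cover :
  [set a : n.-tuple R | \sum_i c i * tnth a i = 0 /\ forall i, `|tnth a i| <= M]
  `<=` \bigcup_g box (grid_lo g) (grid_hi g).
Proof.
move=> a [hyp bnd].
have /fin_all_exists[j node_j] := fun i => grid_cell N M0 (bnd i).
pose g := [ffun i => if i == k then ord0 else j i].
have near_node i : i != k -> node g i <= tnth a i <= node g i + h.
  by move=> ik; rewrite /node ffunE (negbTE ik); apply: node_j.
have ak : tnth a k = - \sum_(i | i != k) b i * tnth a i.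
  rewrite (bigD1 k) //= in hyp; apply: (mulfI ck); rewrite mulrN mulr_sumr.
  under eq_bigr do rewrite /b mulrA (mulrC (c k)) divfK //.
  by apply/eqP; rewrite -addr_eq0 hyp.
have gk : g k = ord0 by rewrite ffunE eqxx.
exists g => // i; rewrite !tnth_mktuple.
case: eqP => [->|/eqP ik]; last exact: near_node.
suff : `|tnth a k - center g| <= B * h by rewrite gk eqxx ler_norml; lra.
rewrite ak /center opprK addrC -sumrB /B mulr_suml.
apply: le_trans (ler_norm_sum _ _ _) _; apply: ler_sum => m mk.
rewrite -mulrBr normrM ler_wpM2l // ler_norml.
by have := near_node m mk; lra.
Qed.

Lemma grid_volume :
  \sum_g box_volume (grid_lo g) (grid_hi g) = vol_const / N.+1%:R.
Proof.
pose W i (j : 'I_N.+1) := if i == k then (B * h *+ 2) *+ (j == ord0) else h.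
have -> : \sum_g box_volume (grid_lo g) (grid_hi g) =
          \sum_(g : grid) \prod_i W i (g i).
  apply: eq_bigr => g _; apply: eq_bigr => i _; rewrite !tnth_mktuple /W.
  by case: eqP => [->|_]; [case: (g k == ord0) => /=; ring | ring].
rewrite -bigA_distr_bigA (bigD1 k) //= (bigD1 ord0) //= big1; last first.
  by move=> j /negbTE j0; rewrite /W eqxx j0.
rewrite {1}/W eqxx /= addr0 mulr1n.
have -> : \prod_(i | i != k) \sum_(j < N.+1) W i j = \prod_(i | i != k) (M *+ 2).
  apply: eq_bigr => i /negbTE ik; rewrite /W ik sumr_const card_ord /h.
  by rewrite -[_ *+ N.+1]mulr_natr divfK // pnatr_eq0.
by rewrite /vol_const /h; field; rewrite nat1r pnatr_eq0.
Qed.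

End Grid.

Lemma hyperplane_box_null :
  lebesgue_null [set a : n.-tuple R |
    \sum_i c i * tnth a i = 0 /\ forall i, `|tnth a i| <= M].
Proof.
apply: lebesgue_null_finite_covers => [|e e0].
  exact: leq_ltn_trans (leq0n k) (ltn_ord k).
pose N := Num.truncn (vol_const / e).
exists {ffun 'I_n -> 'I_N.+1}, (@grid_lo N), (@grid_hi N); split.
- exact: grid_lo_le_hi.
- exact: hyperplane_grid_cover.
rewrite grid_volume ler_pdivrMr // mulrC -ler_pdivrMr //.
by have /andP[_ /ltW] := truncn_itv (divr_ge0 vol_const_ge0 (ltW e0)).
Qed.

End HyperplaneCover.

Lemma measurable_set_pred (d : measure_display) (T : measurableType d)
    (p : T -> bool) :
  measurable_fun setT p -> measurable [set x | p x].
Proof.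
move=> mp; have := mp measurableT [set true] I; rewrite setTI.
by congr measurable; apply/seteqP; split => x.
Qed.

Lemma negligible_fin_bigcup (d : measure_display) (T : measurableType d)
    (R : realType) (mu : {measure set T -> \bar R}) (I : finType) (P : pred I)
    (F : I -> set T) :
  (forall i, P i -> mu.-negligible (F i)) ->
  mu.-negligible (\bigcup_(i in [set i | P i]) F i).
Proof.
move=> negF; have -> : [set i | P i] = [set i | (i \in index_enum I) && P i].
  by apply/seteqP; split => i /=; rewrite mem_index_enum.
rewrite bigcup_seq_cond; elim/big_ind: _ => //.
- exact: negligible_set0.
- exact: negligibleU.
Qed.

Lemma hyperplane_negligible (R : realType) n (P : probability (n.-tuple R) R)
    (c : 'I_n -> R) (k : 'I_n) :
  c k != 0 -> abs_cont_lebesgue P ->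
  P.-negligible [set a : n.-tuple R | \sum_i c i * tnth a i = 0].
Proof.
move=> ck ac.
pose slab m := [set a : n.-tuple R |
  (\sum_i c i * tnth a i == 0) && (\sum_i `|tnth a i| <= m.+1%:R)].
have slab_negligible m : P.-negligible (slab m).
  have slab_measurable : measurable (slab m).
    apply/measurable_set_pred/measurable_and.
      apply: measurable_fun_eqr (measurable_cst _).
      apply: measurable_sum => i; apply: measurable_funM.
        exact: measurable_cst.
      exact: measurable_tnth.
    apply: measurable_fun_ler (measurable_cst _).
    apply: measurable_sum => i; apply: measurableT_comp.
      exact: normr_measurable.
    exact: measurable_tnth.
  apply/negligibleP => //; apply: ac => //.
  apply: lebesgue_nullS (hyperplane_box_null ck (ltr0Sn _ m)).
  move=> a /andP[/eqP hyp bnd]; split => // i; apply: le_trans bnd.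
  by rewrite (bigD1 i) //= lerDl sumr_ge0.
apply: negligibleS (negligible_bigcup slab_negligible) => a /= hyp.
have norm_ge0 : 0 <= \sum_i `|tnth a i| by rewrite sumr_ge0.
exists (Num.truncn (\sum_i `|tnth a i|)) => //; rewrite /slab /= hyp eqxx /=.
by have /andP[_ /ltW] := truncn_itv norm_ge0.
Qed.

Lemma sign_generic_ae (R : realType) n (P : probability (n.-tuple R) R) :
  abs_cont_lebesgue P -> {ae P, forall a : n.-tuple R, sign_generic a}.
Proof.
move=> ac.
pose hyperplane (s : {ffun 'I_n -> option bool}) :=
  [set a : n.-tuple R | \sum_i opm1 R (s i) * tnth a i = 0].
have hyperplane_null s : s != [ffun => None] -> P.-negligible (hyperplane s).
  move=> s_nz; have [k sk] : exists k, s k != None.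
    apply/existsP; apply: contraNT s_nz => /existsPn s_None.
    by apply/eqP/ffunP => k; rewrite ffunE; apply/eqP/negPn/s_None.
  apply: (hyperplane_negligible (k := k)) ac.
  by case: (s k) sk => // -[] _; rewrite /opm1 /pm1 /= ?oppr_eq0 oner_eq0.
apply: negligibleS (negligible_fin_bigcup hyperplane_null) => a /= not_gen.
apply: contra_notP not_gen => not_in s s_nz; apply/eqP => hyp.
by apply: not_in; exists s.
Qed.

Theorem propositionG1 (R : realType) (d : nat) (SS : {set {set 'I_d}})
    (P : probability (#|SS|.-tuple R) R) :
  msp_family SS ->
  abs_cont_lebesgue P ->
  {ae P, forall a : #|SS|.-tuple R, SMSP (fstar a)}.
Proof.
move=> msp ac; apply: filterS (sign_generic_ae ac) => a.
exact: SMSP_fstar msp.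
Qed.
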